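(* Let $\mathcal Y$ be a finite set, let $R$ be a probability measure on $\mathcal Y$ with $r(y)=R(\{y\})>0$ for all $y$, and let $p,q:\mathcal Y\to(0,\infty)$ be the densities with respect to $R$ of probability measures $P,Q$ on $\mathcal Y$. For $\gamma\notin\{0,-1\}$ define $$D_\gamma(P,Q;R)=-\frac1\gamma\frac{\sum_{y} p(y)q(y)^\gamma r(y)}{\big(\sum_y q(y)^{\gamma+1}r(y)\big)^{\gamma/(\gamma+1)}}+\frac1\gamma\Big(\sum_y p(y)^{\gamma+1}r(y)\Big)^{1/(\gamma+1)},$$ and define the GM-divergence $$D_{\rm GM}(P,Q;R)=\Big(\sum_y\frac{p(y)}{q(y)}r(y)\Big)\exp\Big\{\sum_y r(y)\log q(y)\Big\}-\exp\Big\{\sum_y r(y)\log p(y)\Big\}.$$ Then $\lim_{\gamma\to-1}D_\gamma(P,Q;R)=D_{\rm GM}(P,Q;R)$. *)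

From HB Require Import structures.
From mathcomp Require Import all_boot all_order all_algebra.
From mathcomp Require Import all_classical all_reals all_analysis.
Set Implicit Arguments. Unset Strict Implicit. Unset Printing Implicit Defensive.
Import Order.TTheory GRing.Theory Num.Theory.
Import numFieldNormedType.Exports.
Local Open Scope ring_scope.

Definition Dgamma (Y : finType) (R : realType) (r p q : Y -> R) (g : R) : R :=
  - g^-1 * ((\sum_y p y * q y `^ g * r y)
             / (\sum_y q y `^ (g + 1) * r y) `^ (g / (g + 1)))
  + g^-1 * (\sum_y p y `^ (g + 1) * r y) `^ ((g + 1)^-1).

Definition DGM (Y : finType) (R : realType) (r p q : Y -> R) : R :=
  (\sum_y p y / q y * r y) * expR (\sum_y r y * ln (q y))
  - expR (\sum_y r y * ln (p y)).

From HB Require Import structures.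
From mathcomp Require Import all_boot all_order all_algebra.
From mathcomp Require Import all_classical all_reals all_analysis.
Import Order.TTheory GRing.Theory Num.Theory.
Import numFieldNormedType.Exports.
Local Open Scope classical_set_scope.
Local Open Scope ring_scope.

(* Put t = g + 1 and let M_t(a) = (sum_y a(y)^t r(y))^(1/t) be the r-weighted
   power mean of order t.  Then D_g = g^-1 (M_t(p) - N(g) M_t(q)^(-g)) with
   N(g) = sum_y p(y) q(y)^g r(y), and N(-1) = sum_y (p(y)/q(y)) r(y).  As t -> 0
   the power mean tends to the geometric mean exp(sum_y r(y) ln a(y)): since
   sum_y r(y) = 1, t^-1 ln (sum_y a(y)^t r(y)) is a difference quotient at 0 of
   t |-> ln (sum_y r(y) exp(t ln a(y))), whose derivative there is
   sum_y r(y) ln a(y).  The rest is continuity. *)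

Section ShiftedLimits.
Context {R : numFieldType} {V : pseudoMetricNormedZmodType R}.

Lemma dnbhs_comp_shift {T : Type} (a b : V) (f : V -> T) :
  (f \o shift b) @ a^' = f @ (a + b)^'.
Proof.
rewrite funeqE => A; apply: propext.
change ((\forall x \near a, x != a -> A (f (x + b))) <->
        (\forall x \near a + b, x != a + b -> A (f x))).
rewrite (near_shift a (a + b)) [a + b]addrC addrK /= [b + a]addrC.
by split; apply: filterS => x + xab; apply; apply: contra xab;
  [move=> /eqP -> | move=> /eqP /addIr ->].
Qed.
End ShiftedLimits.

Section RealLimits.
Context {R : realType}.

Lemma powR_gt0E (a x : R) : 0 < a -> a `^ x = expR (x * ln a).
Proof. by move=> a_gt0; rewrite /powR gt_eqF. Qed.

Lemma cvg_powR {T : Type} (F : set_system T) {FF : Filter F} (f g : T -> R)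
    (a x : R) : 0 < a -> f @ F --> a -> g @ F --> x ->
  f t `^ g t @[t --> F] --> a `^ x.
Proof.
move=> a_gt0 fa gx; rewrite powR_gt0E//.
have lnf : (@ln R \o f) @ F --> ln a :=
  continuous_cvg FF (continuous_ln a_gt0) fa.
apply: cvg_trans (continuous_cvg FF (@continuous_expR R _) (cvgM gx lnf)).
apply: near_eq_cvg; near=> t; rewrite /= powR_gt0E//.
by near: t; exact: cvgr_gt fa _ a_gt0.
Unshelve. all: by end_near. Qed.

Lemma cvg_diff_quotient {f : R -> R} {x df : R} : is_derive x 1 f df ->
  h^-1 * (f (h + x) - f x) @[h --> 0^'] --> df.
Proof.
move=> fdf; have := @ex_derive _ _ _ _ _ _ _ fdf.
rewrite /derivable -/(derive f x 1) derive_val.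
by under eq_fun do rewrite /= /GRing.scale /= mulr1.
Qed.

Lemma is_derive_sum_expR {Y : finType} (c b : Y -> R) (x : R) :
  is_derive x 1 (fun t => \sum_y c y * expR (b y * t))
    (\sum_y c y * (b y * expR (b y * x))).
Proof.
have -> : (fun t => \sum_y c y * expR (b y * t)) =
    \sum_y (fun t => c y * expR (b y * t)) by rewrite fct_sumE.
elim/big_ind2: _ => [|*|y _]; [exact: is_derive_cst | exact: is_deriveD |].
apply: is_deriveZ; rewrite mulrC.
apply: is_derive1_comp.
apply: is_derive_eq (is_deriveZ (b y) (is_derive_id x 1)) _.
by rewrite /GRing.scale /= mulr1.
Qed.

End RealLimits.

Section WeightedMeans.
Context {Y : finType} {R : realType} (r : Y -> R).
Hypotheses (r_gt0 : forall y, 0 < r y) (sum_r : \sum_y r y = 1).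

Definition power_mean (a : Y -> R) (t : R) : R :=
  (\sum_y a y `^ t * r y) `^ t^-1.

Definition geometric_mean (a : Y -> R) : R := expR (\sum_y r y * ln (a y)).

Lemma weighted_sum_gt0 (f : Y -> R) : (forall y, 0 < f y) ->
  0 < \sum_y f y * r y.
Proof.
move=> f_gt0; have [y0 _|Y0] := pickP Y.
  rewrite (bigD1 y0)//= ltr_pwDl ?mulr_gt0//.
  by rewrite sumr_ge0// => y _; rewrite ltW ?mulr_gt0.
by move: sum_r; rewrite big_pred0// => /esym/eqP; rewrite oner_eq0.
Qed.

Lemma ln_power_mean_cvg0 (a : Y -> R) : (forall y, 0 < a y) ->
  ln (power_mean a t) @[t --> 0^'] --> \sum_y r y * ln (a y).
Proof.
move=> a_gt0; pose S t := \sum_y r y * expR (ln (a y) * t).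
have S0 : S 0 = 1.
  by rewrite -sum_r; apply: eq_bigr => y _; rewrite mulr0 expR0 mulr1.
have dS : is_derive (0 : R) 1 S (\sum_y r y * ln (a y)).
  apply: is_derive_eq (is_derive_sum_expR r (fun y => ln (a y)) 0) _.
  by apply: eq_bigr => y _; rewrite mulr0 expR0 mulr1.
have := cvg_diff_quotient (is_derive1_comp (is_derive1_ln _) dS).
rewrite S0 invr1 mul1r => /(_ ltr01); apply: cvg_trans.
apply: near_eq_cvg; apply: nearW => t.
rewrite /= /power_mean ln_powR addr0 S0 ln1 subr0; congr (_ * ln _).
by apply: eq_bigr => y _; rewrite powR_gt0E// mulrC (mulrC t).
Qed.

Lemma power_mean_cvg0 (a : Y -> R) : (forall y, 0 < a y) ->
  power_mean a t @[t --> 0^'] --> geometric_mean a.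
Proof.
move=> a_gt0; apply: cvg_trans
  (continuous_cvg _ (@continuous_expR R _) (ln_power_mean_cvg0 a a_gt0)).
apply: near_eq_cvg; apply: nearW => t /=.
by rewrite lnK// posrE powR_gt0// weighted_sum_gt0// => y; rewrite powR_gt0.
Qed.

End WeightedMeans.

Theorem mainTheorem3 (Y : finType) (R : realType) (r p q : Y -> R)
  (hr : forall y, 0 < r y) (hr1 : \sum_y r y = 1)
  (hp : forall y, 0 < p y) (hp1 : \sum_y p y * r y = 1)
  (hq : forall y, 0 < q y) (hq1 : \sum_y q y * r y = 1) :
  Dgamma r p q g @[g --> (-1 : R)^'] --> DGM r p q.
Proof.
pose N g := \sum_y p y * q y `^ g * r y.
have g_cvg : g @[g --> (-1 : R)^'] --> (-1 : R) := @nbhs_dnbhs _ (-1 : R).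
have M_cvg (a : Y -> R) : (forall y, 0 < a y) ->
    power_mean r a (g + 1) @[g --> (-1 : R)^'] --> geometric_mean r a.
  move=> a_gt0; rewrite (dnbhs_comp_shift (-1 : R) 1 (power_mean r a)) addNr.
  exact: power_mean_cvg0.
have N_cvg : N g @[g --> (-1 : R)^'] --> N (-1).
  rewrite /N; apply: cvg_big => [|y _]; first exact: add_continuous.
  apply: cvgM; last exact: cvg_cst.
  apply: cvgM; [exact: cvg_cst | exact: cvg_powR (hq y) (cvg_cst _) g_cvg].
have -> : Dgamma r p q = fun g =>
    g^-1 * (power_mean r p (g + 1) - N g * power_mean r q (g + 1) `^ (- g)).
  apply/funext => g; rewrite /Dgamma /power_mean [g / _]mulrC powRrM powRN.
  by rewrite mulNr mulrBr addrC.
have -> : DGM r p q =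
    (-1)^-1 * (geometric_mean r p - N (-1) * geometric_mean r q `^ (- -1)).
  rewrite opprK powRr1 ?expR_ge0// invrN1 mulN1r opprB /DGM /geometric_mean.
  by congr (_ * _ - _); apply: eq_bigr => y _; rewrite powR_inv1 ?ltW.
apply: cvgM; first by apply: cvgV g_cvg; rewrite oppr_eq0 oner_eq0.
apply: cvgB; first exact: M_cvg.
apply: cvgM N_cvg _; apply: cvg_powR (expR_gt0 _) (M_cvg q hq) (cvgN g_cvg).
Qed.
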